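(* Let $Y$ be an integrable random sup-measure on $E$. Then almost surely $Y$ is a scaled indicator sup-measure, i.e. $Y(\cdot)=c\,\mathbf 1_{F\cap\,\cdot\,\neq\emptyset}$ for some (random) $c\ge0$ and closed $F\subset E$, if and only if $$\mathbb E\int^e f\,dY=\mathbb E\int f\,dY\qquad\text{for all } f\in\mathrm{USC}.$$
   Context: $E$ is a locally compact Hausdorff second countable space; $\mathcal K$ its compact subsets. A sup-measure on $E$ is a Choquet capacity $\varphi$ (non-decreasing, $\varphi(\emptyset)=0$, $\varphi(A_n)\uparrow\varphi(A)$ if $A_n\uparrow A$, $\varphi(K_n)\downarrow\varphi(K)$ for compact $K_n\downarrow K$), finite on compacts, with $\varphi(\bigcup_j G_j)=\sup_j\varphi(G_j)$ for all families of open sets; a random sup-measure is a random element of the space of sup-measures (Borel $\sigma$-algebra of the sup-vague topology); $Y$ is integrable if $\mathbb E\,Y(K)<\infty$ for all $K\in\mathcal K$. $\mathrm{USC}$: bounded non-negative upper semicontinuous functions on $E$ with relatively compact support. For $f\in\mathrm{USC}$: extremal integral $\int^e f\,d\varphi=\sup\{\varphi(K)\inf_{x\in K}f(x):K\in\mathcal K\}$; Choquet integral $\int f\,d\varphi=\int_0^\infty\varphi(\{f\ge t\})\,dt$. *)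

From HB Require Import structures.
From mathcomp Require Import all_boot all_order all_algebra.
From mathcomp Require Import all_classical all_reals all_analysis.
Set Implicit Arguments. Unset Strict Implicit. Unset Printing Implicit Defensive.
Import Order.TTheory GRing.Theory Num.Theory.
Local Open Scope classical_set_scope.
Local Open Scope ring_scope.

Section SupMeasures.
Context {R : realType} {E : topologicalType}.
Local Open Scope ereal_scope.

Definition sup_measure (phi : set E -> \bar R) : Prop :=
  [/\ phi set0 = 0,
      (forall A B, A `<=` B -> phi A <= phi B) &
      (forall A : set E, 0 <= phi A)] /\
  [/\
      (forall A : nat -> set E, {homo A : n m / (n <= m)%N >-> n `<=` m} ->
          (phi \o A) @ \oo --> phi (\bigcup_n A n)),
      (forall K : nat -> set E, (forall n, compact (K n)) ->
          {homo K : n m / (n <= m)%N >-> m `<=` n} ->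
          (phi \o K) @ \oo --> phi (\bigcap_n K n)),
      (forall K, compact K -> phi K < +oo) &
      (forall G : set (set E), G !=set0 -> (forall g, G g -> open g) ->
          phi (\bigcup_(g in G) g) = ereal_sup (phi @` G))].

Definition SM : set (set E -> \bar R) := [set m | sup_measure m].

Definition sv_subbase : set (set (set E -> \bar R)) :=
  [set B | (exists (K : set E) (x : R), compact K /\ B = [set m | m K < x%:E])
        \/ (exists (G : set E) (x : R), open G /\ B = [set m | x%:E < m G])].

Definition sv_fin_inter : set (set (set E -> \bar R)) :=
  [set B | exists (n : nat) (b : nat -> set (set E -> \bar R)),
     (forall i, (i < n)%N -> sv_subbase (b i)) /\ B = \bigcap_(i in `I_n) b i].

Definition sv_open : set (set (set E -> \bar R)) :=
  [set U | exists V : set (set (set E -> \bar R)),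
     V `<=` sv_fin_inter /\ U = SM `&` \bigcup_(v in V) v].

Definition sv_borel : set (set (set E -> \bar R)) := <<s SM, sv_open >>.

Definition random_sup_measure d (Omega : measurableType d)
    (Y : Omega -> set E -> \bar R) : Prop :=
  (forall w, SM (Y w)) /\
  (forall B, sv_borel B -> measurable (Y @^-1` B)).

Definition integrable_rsm d (Omega : measurableType d) (P : probability Omega R)
    (Y : Omega -> set E -> \bar R) : Prop :=
  forall K, compact K -> \int[P]_w Y w K < +oo.

Definition upper_semicontinuous (f : E -> R) : Prop :=
  forall t : R, open [set x | (f x < t)%R].

Definition USC (f : E -> R) : Prop :=
  [/\ (exists M : R, forall x, (`|f x| <= M)%R),
      (forall x, (0 <= f x)%R),
      upper_semicontinuous f &
      compact (closure [set x | f x != 0%R])].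

Definition ext_int (f : E -> R) (phi : set E -> \bar R) : \bar R :=
  ereal_sup [set phi K * ereal_inf [set (f x)%:E | x in K] | K in [set K | compact K]].

Definition choquet_int (f : E -> R) (phi : set E -> \bar R) : \bar R :=
  \int[@lebesgue_measure R]_(t in `[0%R, +oo[) phi [set x | (t <= f x)%R].

Definition scaled_indicator (phi : set E -> \bar R) : Prop :=
  exists (c : R) (F : set E), [/\ (0 <= c)%R, closed F &
    forall A, phi A = if `[< F `&` A !=set0 >] then c%:E else 0].

End SupMeasures.

From HB Require Import structures.
From mathcomp Require Import all_boot all_order all_algebra.
From mathcomp Require Import all_classical all_reals all_analysis.
From mathcomp Require Import measurable_realfun lra.
Import Order.TTheory GRing.Theory Num.Theory.
Local Open Scope classical_set_scope.
Local Open Scope ring_scope.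
Set Implicit Arguments. Unset Strict Implicit. Unset Printing Implicit Defensive.
Import HBNNSimple.

(* For a scaled indicator c 1_{F meets .} both integrals of f equal c sup_F f, which gives one
   direction pathwise. Conversely, for compacts K <= L the test function 1_K + 1_L has extremal
   integral max (Y L) (2 Y K) and Choquet integral Y L + Y K, the latter being pointwise larger;
   equal finite expectations force Y K = 0 or Y K = Y L almost surely. This holds simultaneously
   for the countably many finite unions of finite intersections of closures of a relatively
   compact countable base. Such a sup-measure takes only the values 0 and Y E on these compacts,
   hence on points (by continuity along shrinking compact neighbourhoods), and is Y E times the
   indicator of the closed set of points of positive mass. *)

Section ge0_integral_off_null.
Local Open Scope ereal_scope.
Context d (T : measurableType d) (R : realType) (mu : {measure set T -> \bar R}).

Let simple_sup (f : T -> \bar R) :=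
  ereal_sup [set sintegral mu h | h in [set h : {nnsfun T >-> R} | forall x, (h x)%:E <= f x]].

(* Multiplying by the indicator of the complement of [N] changes no simple integral. *)
Let simple_sup_le_off_null (f g : T -> \bar R) (N : set T) :
  measurable N -> mu N = 0 -> (forall x, 0 <= g x) ->
  (forall x, ~ N x -> f x <= g x) -> simple_sup f <= simple_sup g.
Proof.
move=> mN N0 g0 fg; apply: ge_ereal_sup => _ [h hf <-].
pose h' := mul_nnsfun h (indic_nnsfun R (measurableC mN)).
have sintegralE (k : {nnsfun T >-> R}) : sintegral mu k = \int[mu]_x (k x)%:E.
  by rewrite (integral_nnsfun mu measurableT) patch_setT.
have -> : sintegral mu h = sintegral mu h'.
  rewrite !sintegralE; apply: ae_eq_integral => //;
    try by apply/measurable_EFinP; exact: measurable_funPT.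
  exists N; split => // x /= /not_implyP [_]; apply: contra_notP => Nx.
  by rewrite /h' /= mindicE mem_set ?mulr1.
apply: ereal_sup_ubound; exists h' => // x /=.
rewrite mindicE; case: (boolP (x \in ~` N)) => [/set_mem xN|_].
  by rewrite mulr1; apply: le_trans (hf x) (fg x xN).
by rewrite mulr0.
Qed.

(* No measurability is required, unlike [ge0_ae_eq_integral]. *)
Lemma ge0_integral_eq_off_null (D N : set T) (f g : T -> \bar R) :
  measurable N -> mu N = 0 ->
  (forall x, D x -> 0 <= f x) -> (forall x, D x -> 0 <= g x) ->
  (forall x, D x -> ~ N x -> f x = g x) ->
  \int[mu]_(x in D) f x = \int[mu]_(x in D) g x.
Proof.
move=> mN N0 f0 g0 fg; rewrite (ge0_integralE mu f0) (ge0_integralE mu g0).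
have patch_ge0 (h : T -> \bar R) :
    (forall x, D x -> 0 <= h x) -> forall x, 0 <= (h \_ D) x.
  by move=> h0 x; rewrite patchE; case: ifPn => // /set_mem /h0.
apply/eqP; rewrite eq_le; apply/andP; split;
  apply: (simple_sup_le_off_null mN N0); try exact: patch_ge0;
  by move=> x Nx; rewrite !patchE; case: ifPn => // /set_mem Dx; rewrite fg.
Qed.

Lemma ae_eq_ge0_le_integral_eq (g h : T -> \bar R) :
  measurable_fun setT g -> measurable_fun setT h ->
  (forall x, 0 <= h x) -> (forall x, h x \is a fin_num) -> (forall x, h x <= g x) ->
  \int[mu]_x h x \is a fin_num -> \int[mu]_x h x = \int[mu]_x g x ->
  {ae mu, forall x, h x = g x}.
Proof.
move=> mg mh h0 hfin hg hI hgI.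
have gh0 x : 0 <= g x - h x by rewrite sube_ge0 ?hfin.
have mgh : measurable_fun setT (fun x => g x - h x) by exact: emeasurable_funB.
have gE : \int[mu]_x g x = \int[mu]_x h x + \int[mu]_x (g x - h x).
  rewrite -ge0_integralD //; apply: eq_integral => x _.
  by rewrite addeC subeK.
have : \int[mu]_x (g x - h x) = 0.
  have := congr1 (fun z => z - \int[mu]_x h x) (etrans hgI gE) => /=.
  by rewrite subee // [X in _ = X - _]addeC addeK.
move=> gh_int0.
have : ae_eq mu setT (fun x => g x - h x) (cst 0).
  apply/(ae_eq_integral_abs mu measurableT mgh); rewrite -gh_int0.
  by apply: eq_integral => x _; rewrite gee0_abs.
apply: filterS => x /(_ I) /= /(congr1 (fun z => z + h x)).
by rewrite subeK // add0e.
Qed.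

End ge0_integral_off_null.

Section sup_measure_properties.
Context {R : realType} {E : topologicalType} (phi : set E -> \bar R).
Hypothesis hphi : sup_measure phi.
Local Open Scope ereal_scope.

Lemma sup_measure0 : phi set0 = 0.
Proof. by case: hphi => -[]. Qed.

Lemma sup_measure_ge0 A : 0 <= phi A.
Proof. by case: hphi => -[]. Qed.

Lemma le_sup_measure A B : A `<=` B -> phi A <= phi B.
Proof. by case: hphi => -[_ + _] _; apply. Qed.

Lemma sup_measure_compact_fin_num K : compact K -> phi K \is a fin_num.
Proof.
by move=> cK; rewrite ge0_fin_numE ?sup_measure_ge0 //; case: hphi => _ [_ _ + _]; apply.
Qed.

Lemma sup_measure_cvg_compact_decr (K : nat -> set E) :
  (forall n, compact (K n)) -> {homo K : n m / (n <= m)%N >-> m `<=` n} ->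
  (phi \o K) @ \oo --> phi (\bigcap_n K n).
Proof. by case: hphi => _ [_ + _ _]; apply. Qed.

Lemma sup_measure_bigcup_open (G : set (set E)) : G !=set0 ->
  (forall g, G g -> open g) -> phi (\bigcup_(g in G) g) = ereal_sup (phi @` G).
Proof. by case: hphi => _ [_ _ _ +]; apply. Qed.

End sup_measure_properties.

Lemma ext_int_ge0 {R : realType} {E : topologicalType} (f : E -> R) (phi : set E -> \bar R) :
  phi set0 = 0%E -> (0 <= ext_int f phi)%E.
Proof.
move=> phi0; apply: (@le_trans _ _ (phi set0 * ereal_inf [set (f x)%:E | x in set0])%E).
  by rewrite phi0 mul0e.
by apply: ereal_sup_ubound; exists set0 => //; exact: compact0.
Qed.

Lemma choquet_int_ge0 {R : realType} {E : topologicalType} (f : E -> R) (phi : set E -> \bar R) :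
  (forall A, 0 <= phi A)%E -> (0 <= choquet_int f phi)%E.
Proof. by move=> phi_ge0; apply: integral_ge0 => t _; exact: phi_ge0. Qed.

Lemma relatively_compact_countable_base (E : topologicalType) :
  locally_compact [set: E] -> @second_countable E ->
  exists b : nat -> set E, [/\ (forall n, open (b n)), (forall n, compact (closure (b n))) &
    (forall x (U : set E), open U -> U x -> exists n, b n x /\ b n `<=` U)].
Proof.
move=> lc [B cB [Bo Bb]].
have /countable_injP [g ginj] := cB.
pose Q n := [set U : set E | B U /\ g U = n /\ compact (closure U)].
pose b n : set E := match pselect (exists U, Q n U) with
  | left ex => proj1_sig (cid ex) | right _ => set0 end.
have bQ n : (exists U, Q n U) -> Q n (b n).
  by rewrite /b; case: pselect => // ex _; exact: (proj2_sig (cid ex)).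
have bC n : Q n (b n) \/ b n = set0.
  by rewrite /b; case: pselect => [ex|_]; [left; exact: (proj2_sig (cid ex)) | right].
exists b; split.
- by move=> n; case: (bC n) => [[/Bo]|->] //; exact: open0.
- by move=> n; case: (bC n) => [[_ []]|->] //; rewrite closure0; exact: compact0.
move=> x U oU Ux.
have [V Vx [cV clV]] := lc x I.
have nV : nbhs x V by move: Vx; rewrite /within /=; apply: filterS => y; apply.
have nUV : nbhs x (U `&` V) by apply: filterI => //; exact: open_nbhs_nbhs.
have [W [BW Wx] WUV] := Bb x _ nUV.
have cW : compact (closure W).
  apply: (@subclosed_compact _ _ V) => //; first exact: closed_closure.
  by rewrite (closure_id V).1 //; apply: closureS => y /WUV [].
have [Bbg [gbg _]] := bQ (g W) (ex_intro _ W (conj BW (conj erefl cW))).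
have bgW : b (g W) = W by apply: ginj => //; rewrite inE.
by exists (g W); rewrite bgW; split => // y /WUV [].
Qed.

Lemma nbhs_openP (E : topologicalType) (x : E) A :
  nbhs x A -> exists2 U, open U /\ U x & U `<=` A.
Proof. by rewrite nbhsE => -[U [oU Ux] UA]; exists U. Qed.

Section dichotomy_scaled_indicator.
Context {R : realType} {E : topologicalType}.
Local Open Scope ereal_scope.
Variable b : nat -> set E.
Hypothesis b_open : forall n, open (b n).
Hypothesis b_relcpt : forall n, compact (closure (b n)).
Hypothesis b_base : forall x (U : set E), open U -> U x -> exists n, b n x /\ b n `<=` U.
Hypothesis hE : hausdorff_space E.

Fixpoint cl_cap (l : seq nat) : set E :=
  if l is i :: l' then closure (b i) `&` cl_cap l' else setT.

(* Prepending [closure (b (head 0 l))] makes the set compact also for [l = [::]]. *)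
Definition cl_cpt l := closure (b (head 0%N l)) `&` cl_cap l.

Fixpoint cl_cup (s : seq (seq nat)) : set E :=
  if s is l :: s' then cl_cpt l `|` cl_cup s' else set0.

Lemma cl_capP l y : cl_cap l y <-> forall i, i \in l -> closure (b i) y.
Proof.
elim: l => [|i l IH] /=; first by split.
split=> [[ci /IH H] j|H]; first by rewrite inE => /orP[/eqP->//|/H].
split; first by apply: H; rewrite inE eqxx.
by apply/IH => j jl; apply: H; rewrite inE jl orbT.
Qed.

Lemma cl_cap_closed l : closed (cl_cap l).
Proof.
by elim: l => [|i l IH] /=; [exact: closedT | apply: closedI => //; exact: closed_closure].
Qed.

Lemma cl_cpt_compact l : compact (cl_cpt l).
Proof.
apply: (@subclosed_compact _ _ (closure (b (head 0%N l)))) => //.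
- by apply: closedI; [exact: closed_closure | exact: cl_cap_closed].
- by move=> y [].
Qed.

Lemma cl_cup_compact s : compact (cl_cup s).
Proof.
by elim: s => [|l s IH] /=; [exact: compact0 | apply: compactU => //; exact: cl_cpt_compact].
Qed.

Lemma cl_cup1 l : cl_cup [:: l] = cl_cpt l.
Proof. exact: setU0. Qed.

Lemma cl_cup_cat s t : cl_cup (s ++ t) = cl_cup s `|` cl_cup t.
Proof. by elim: s => [|l s IH] /=; [rewrite set0U | rewrite IH setUA]. Qed.

Lemma closure_base_nbhs i x : b i x -> nbhs x (closure (b i)).
Proof. by move=> bix; apply: (filterS (@subset_closure _ (b i))); exact: open_nbhs_nbhs. Qed.

Lemma cl_cap_nbhs l x : (forall i, i \in l -> b i x) -> nbhs x (cl_cap l).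
Proof.
elim: l => [|i l IH] H /=; first exact: filterT.
apply: filterI; first by apply: closure_base_nbhs; apply: H; rewrite inE eqxx.
by apply: IH => j jl; apply: H; rewrite inE jl orbT.
Qed.

Lemma base_cover x : exists n, b n x.
Proof. by have [n [bn _]] := b_base (@openT E) (I : setT x); exists n. Qed.

Section shrinking_neighbourhoods.
Variables (x : E) (n0 : nat).
Hypothesis bn0x : b n0 x.

Definition near_idx m := n0 :: [seq i <- iota 0 m | `[< b i x >]].
Definition near_cpt m := cl_cpt (near_idx m).

Lemma near_idxP m i : i \in near_idx m -> b i x.
Proof. by rewrite inE => /orP[/eqP->//|]; rewrite mem_filter => /andP[/asboolP]. Qed.

Lemma near_cpt_nbhs m : nbhs x (near_cpt m).
Proof.
apply: filterI; first exact: closure_base_nbhs.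
by apply: cl_cap_nbhs => i; apply: near_idxP.
Qed.

Lemma near_cpt_decr : {homo near_cpt : n m / (n <= m)%N >-> m `<=` n}.
Proof.
move=> n m nm y [c /cl_capP H]; split => //.
apply/cl_capP => i; rewrite inE => /orP[/eqP->|]; first by apply: H; rewrite inE eqxx.
rewrite mem_filter mem_iota => /andP[bi /andP[_ im]]; apply: H.
by rewrite inE mem_filter mem_iota bi /= (leq_trans im) ?orbT.
Qed.

(* The separation axiom enters here. *)
Lemma bigcap_near_cpt : \bigcap_m near_cpt m = [set x].
Proof.
apply/seteqP; split => [y Hy|y ->]; last first.
  move=> m _; split; first exact: subset_closure.
  by apply/cl_capP => i /near_idxP bi; apply: subset_closure.
suff -> : x = y by [].
apply: hE => A B /nbhs_openP [U [oU Ux] UA] By.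
have [n [bnx bnU]] := b_base oU Ux.
have : closure (b n) y.
  have [_ /cl_capP] := Hy n.+1 I; apply.
  by rewrite inE mem_filter mem_iota /= ltnSn andbT; apply/orP; right; apply/asboolP.
rewrite closureEnbhs => /(_ (b n) B (fun z bz => bz) By) [z [bz Bz]].
by exists z; split => //; apply: UA; apply: bnU.
Qed.

End shrinking_neighbourhoods.

Variable phi : set E -> \bar R.
Hypothesis hphi : sup_measure phi.
Hypothesis phi_dichotomy :
  forall s t, phi (cl_cup s) = 0 \/ phi (cl_cup s) = phi (cl_cup (s ++ t)).

Let le_phi := le_sup_measure hphi.
Let phi_ge0 := sup_measure_ge0 hphi.

Let relcpt_open := [set U : set E | open U /\ exists s, U `<=` cl_cup s].

Let phiT_sup : phi setT = ereal_sup (phi @` relcpt_open).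
Proof.
have cover : \bigcup_(g in relcpt_open) g = setT.
  apply/seteqP; split => // x _; have [n0 bn0] := base_cover x.
  have /nbhs_openP [U [oU Ux] UK] := near_cpt_nbhs bn0 0.
  by exists U => //; split => //; exists [:: near_idx x n0 0]; rewrite cl_cup1.
rewrite -{1}cover sup_measure_bigcup_open //; last by move=> g [].
by exists set0; split; [exact: open0 | exists [::]].
Qed.

Let cl_cup_le_nonnull s t : phi (cl_cup s) != 0 -> phi (cl_cup t) <= phi (cl_cup s).
Proof.
move=> nz; case: (phi_dichotomy t s) => [->//|->]; case: (phi_dichotomy s t) => [e|->].
  by rewrite e eqxx in nz.
by rewrite !cl_cup_cat setUC.
Qed.

Lemma phi_cl_cup_0_or_T s : phi (cl_cup s) = 0 \/ phi (cl_cup s) = phi setT.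
Proof.
case: (eqVneq (phi (cl_cup s)) 0) => [|nz]; first by left.
right; apply/eqP; rewrite eq_le le_phi //= phiT_sup.
apply: ge_ereal_sup => _ [U [_ [t Ut]] <-].
exact: le_trans (le_phi Ut) (cl_cup_le_nonnull t nz).
Qed.

Lemma phiT_fin_num : phi setT \is a fin_num.
Proof.
have [[s nz]|all0] := pselect (exists s, phi (cl_cup s) != 0).
  case: (phi_cl_cup_0_or_T s) => [e|<-]; first by rewrite e eqxx in nz.
  exact/(sup_measure_compact_fin_num hphi)/cl_cup_compact.
rewrite ge0_fin_numE // phiT_sup (@le_lt_trans _ _ 0) //.
apply: ge_ereal_sup => _ [U [_ [t Ut]] <-].
apply: le_trans (le_phi Ut) _; apply: contra_notP all0 => H.
by exists t; apply/negP => /eqP e; rewrite e lexx in H.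
Qed.

Lemma near_cpt_dichotomy x n0 (bn0x : b n0 x) :
  (exists m, phi (near_cpt x n0 m) = 0) \/
  ((forall m, phi (near_cpt x n0 m) = phi setT) /\ phi [set x] = phi setT).
Proof.
have [|N] := pselect (exists m, phi (near_cpt x n0 m) = 0); first by left.
have Hm m : phi (near_cpt x n0 m) = phi setT.
  by case: (phi_cl_cup_0_or_T [:: near_idx x n0 m]); rewrite cl_cup1 // => e; exfalso; apply: N; exists m.
right; split => //.
have := sup_measure_cvg_compact_decr hphi (fun m => @cl_cpt_compact (near_idx x n0 m)) (@near_cpt_decr x n0).
rewrite (bigcap_near_cpt bn0x) (_ : phi \o _ = cst (phi setT)); last exact/funext.
by move/cvg_lim => <- //; exact: lim_cst.
Qed.

Lemma null_point_null_nbhs x : phi [set x] = 0 -> exists U, [/\ open U, U x & phi U = 0].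
Proof.
move=> px; have [n0 bn0] := base_cover x.
have [[m Hm]|[Hm pT]] := near_cpt_dichotomy bn0.
  have /nbhs_openP [U [oU Ux] UK] := near_cpt_nbhs bn0 m.
  by exists U; split => //; apply/eqP; rewrite eq_le phi_ge0 andbT -Hm le_phi.
have /nbhs_openP [U [oU Ux] UK] := near_cpt_nbhs bn0 0.
exists U; split => //; apply/eqP; rewrite eq_le phi_ge0 andbT.
by rewrite -px pT -(Hm 0%N) le_phi.
Qed.

Lemma phi_point_0_or_T x : phi [set x] = 0 \/ phi [set x] = phi setT.
Proof.
have [n0 bn0] := base_cover x.
have [[m Hm]|[_ ->]] := near_cpt_dichotomy bn0; last by right.
left; apply/eqP; rewrite eq_le phi_ge0 andbT -Hm le_phi // => y ->.
by have := bigcap_near_cpt bn0; rewrite eqEsubset => -[_ /(_ x erefl)]; exact.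
Qed.

(* The complement of the support is the union of the open null sets, hence null. *)
Theorem scaled_indicator_of_dichotomy : scaled_indicator phi.
Proof.
set F := [set x | phi [set x] != 0].
set G0 := [set U : set E | open U /\ phi U = 0].
have G0_0 : G0 set0 by split; [exact: open0 | exact: sup_measure0].
have phiG0 : phi (\bigcup_(g in G0) g) = 0.
  rewrite sup_measure_bigcup_open //; [|by exists set0|by move=> g []].
  apply/eqP; rewrite eq_le; apply/andP; split; last first.
    by rewrite -(sup_measure0 hphi); apply: ereal_sup_ubound; exists set0.
  by apply: ge_ereal_sup => _ [U [_ ->] <-].
have CF : ~` F = \bigcup_(g in G0) g.
  apply/seteqP; split => [x /negP/negPn/eqP /null_point_null_nbhs [U [oU Ux U0]]|x [U [_ U0] Ux]].
    by exists U.
  by apply/negP/negPn/eqP; apply/eqP; rewrite eq_le phi_ge0 andbT -U0 le_phi // => y ->.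
exists (fine (phi setT)), F; split.
- by rewrite fine_ge0.
- by rewrite -[F]setCK closedC CF; apply: bigcup_open => g [].
- move=> A; case: asboolP => [[x [Fx Ax]]|nF].
    rewrite fineK ?phiT_fin_num //; apply/eqP; rewrite eq_le le_phi //=.
    case: (phi_point_0_or_T x) => e; first by rewrite /F /= e eqxx in Fx.
    by rewrite -e le_phi // => y ->.
  apply/eqP; rewrite eq_le phi_ge0 andbT -phiG0 le_phi // => x Ax.
  by rewrite -CF => Fx; apply: nF; exists x.
Qed.

End dichotomy_scaled_indicator.

Lemma indic_itv (R : realType) (i : interval R) (t : R) :
  \1_([set` i]) t = (t \in i)%:R :> R.
Proof.
rewrite indicE; case: (boolP (t \in i)) => ti; first by rewrite mem_set.
by rewrite memNset //=; apply/negP.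
Qed.

Section lebesgue_scaled_indicator.
Context {R : realType}.
Local Open Scope ereal_scope.
Notation mu := (@lebesgue_measure R).

Lemma integral_scaled_indic (D A : set R) (a : R) : measurable D -> measurable A ->
  (0 <= a)%R -> \int[mu]_(t in D) (a * \1_A t)%:E = a%:E * mu (A `&` D).
Proof.
move=> mD mA a0; rewrite (@integralZl_indic _ _ _ mu D mD (fun=> A) a) //.
  by rewrite integral_indic.
by rewrite /= ltNge a0.
Qed.

Lemma measurable_scaled_indic (D A : set R) (a : R) : measurable A ->
  measurable_fun D (fun t => (a * \1_A t)%:E).
Proof.
move=> mA; apply/measurable_EFinP; apply: measurable_funM; first exact: measurable_cst.
exact: measurable_indic.
Qed.

Lemma scaled_indic_ge0 (A : set R) (a : R) t : (0 <= a)%R -> 0 <= (a * \1_A t)%:E.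
Proof. by move=> a0; rewrite lee_fin mulr_ge0. Qed.

End lebesgue_scaled_indicator.

Section two_level_test_function.
Context {R : realType} {E : topologicalType}.
Variables K L : set E.
Hypotheses (hE : hausdorff_space E) (cK : compact K) (cL : compact L) (KL : K `<=` L).

Definition indic2 (x : E) : R := \1_K x + \1_L x.

Lemma indic2E x : indic2 x = if `[< K x >] then 2 else if `[< L x >] then 1 else 0.
Proof.
rewrite /indic2 !indicE; case: asboolP => [Kx|nK].
  by rewrite !mem_set //; apply: KL.
rewrite (memNset nK) add0r; case: asboolP => [Lx|nL]; first by rewrite mem_set.
by rewrite memNset.
Qed.

Lemma indic2_ge0 x : 0 <= indic2 x.
Proof. by rewrite addr_ge0. Qed.

Lemma indic2_ge t : 0 < t ->
  [set x | t <= indic2 x] = if t <= 1 then L else if t <= 2 then K else set0.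
Proof.
move=> t0; apply/funext => x; apply/propext; rewrite /= indic2E.
case: (leP t 1) => t1; [|case: (leP t 2) => t2];
  (case: (asboolP (K x)) => [Kx|nK]; [have Lx := KL Kx|case: (asboolP (L x)) => [Lx|nL]]);
  by split => // h; lra.
Qed.

Lemma indic2_USC : USC indic2.
Proof.
split => //.
- exists 2 => x; rewrite ger0_norm ?indic2_ge0 // indic2E.
  by case: asboolP => _; [|case: asboolP => _] => /=; lra.
- exact: indic2_ge0.
- move=> t; have [t0|t0] := leP t 0.
    rewrite (_ : [set x | _] = set0); first exact: open0.
    by apply/seteqP; split => // x /=; have := indic2_ge0 x; lra.
  rewrite (_ : [set x | _] = ~` [set x | t <= indic2 x]); last first.
    by apply/seteqP; split => x /=; rewrite ltNge => /negP.
  rewrite openC indic2_ge //.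
  by case: ifP => _; [|case: ifP => _]; [exact: compact_closed..|exact: closed0].
- rewrite (_ : [set x | _] = L); first by rewrite -(closure_id L).1 //; exact: compact_closed.
  apply/funext => x; apply/propext; rewrite /= indic2E.
  case: (asboolP (K x)) => [Kx|nK]; first by rewrite pnatr_eq0; split => // _; exact: KL.
  by case: (asboolP (L x)) => [Lx|nL]; rewrite ?oner_eq0 ?eqxx.
Qed.

Local Open Scope ereal_scope.
Variable phi : set E -> \bar R.
Hypothesis hphi : sup_measure phi.
Let le_phi := le_sup_measure hphi.
Let phi_ge0 := sup_measure_ge0 hphi.

Lemma ext_int_indic2_le K' :
  phi K' * ereal_inf [set (indic2 x)%:E | x in K'] <= maxe (phi L) (2%:E * phi K).
Proof.
set i := ereal_inf _.
have inf_le x r : K' x -> indic2 x = r -> i <= r%:E.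
  by move=> K'x <-; apply: ereal_inf_lbound; exists x.
have [[x [K'x nL]]|AL] := pselect (exists x, K' x /\ ~ L x).
  have /(lee_wpmul2l (phi_ge0 K')) : i <= 0.
    by apply: (inf_le x) => //; rewrite indic2E !asboolF // => /KL.
  by rewrite mule0 => /le_trans; apply; rewrite le_max phi_ge0.
have K'L : K' `<=` L by move=> y K'y; apply: contra_notP AL => nL; exists y.
have [[x [K'x nK]]|AK] := pselect (exists x, K' x /\ ~ K x).
  have /(lee_wpmul2l (phi_ge0 K')) : i <= 1.
    by apply: (inf_le x) => //; rewrite indic2E asboolF // asboolT //; exact: K'L.
  by rewrite mule1 => /le_trans; apply; rewrite le_max le_phi.
have K'K : K' `<=` K by move=> y K'y; apply: contra_notP AK => nK; exists y.
have [[x K'x]|n0] := pselect (exists x, K' x).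
  have /(lee_wpmul2l (phi_ge0 K')) /le_trans : i <= 2%:E.
    by apply: (inf_le x) => //; rewrite indic2E asboolT //; exact: K'K.
  apply; rewrite le_max; apply/orP; right.
  by rewrite [leRHS]muleC lee_wpmul2r ?le_phi.
rewrite (_ : K' = set0) ?sup_measure0 ?mul0e ?le_max ?phi_ge0 //.
by apply/seteqP; split => // y K'y; apply: n0; exists y.
Qed.

Lemma ext_int_indic2 : ext_int indic2 phi = maxe (phi L) (2%:E * phi K).
Proof.
apply/eqP; rewrite eq_le; apply/andP; split.
  by apply: ge_ereal_sup => _ [K' _ <-]; exact: ext_int_indic2_le.
have term_le A : compact A ->
    phi A * ereal_inf [set (indic2 x)%:E | x in A] <= ext_int indic2 phi.
  by move=> cA; apply: ereal_sup_ubound; exists A.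
rewrite ge_max; apply/andP; split.
  apply: le_trans (term_le _ cL); rewrite -[leLHS]mule1; apply: lee_wpmul2l => //.
  apply: le_ereal_inf_tmp => _ [x Lx <-]; rewrite lee_fin indic2E.
  by case: asboolP => _; [|rewrite asboolT //]; lra.
apply: le_trans (term_le _ cK); rewrite muleC; apply: lee_wpmul2l => //.
by apply: le_ereal_inf_tmp => _ [x Kx <-]; rewrite indic2E asboolT.
Qed.

Lemma choquet_int_indic2 : choquet_int indic2 phi = phi L + phi K.
Proof.
have fL := sup_measure_compact_fin_num hphi cL.
have fK := sup_measure_compact_fin_num hphi cK.
rewrite /choquet_int (@ge0_integral_eq_off_null _ _ _ (@lebesgue_measure R) _ [set 0%R] _
  (fun t => (fine (phi L) * \1_(`]0%R, 1%R] : set R) t)%:E +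
            (fine (phi K) * \1_(`]1%R, 2%R] : set R) t)%:E)); last 5 first.
- exact: measurable_set1.
- exact: lebesgue_measure_set1.
- by move=> t _; apply: phi_ge0.
- by move=> t _; apply: adde_ge0; apply: scaled_indic_ge0; rewrite fine_ge0.
- move=> t; rewrite /= in_itv /= andbT => t0 tn0.
  have tp : (0 < t)%R by rewrite lt_neqAle t0 andbT eq_sym; apply/eqP.
  rewrite indic2_ge // !indic_itv !in_itv /= tp.
  case: (leP t 1%R) => t1 /=; [|case: (leP t 2%R) => t2 /=].
  + by rewrite mulr1 mulr0 adde0 fineK.
  + by rewrite mulr0 mulr1 add0e fineK.
  + by rewrite !mulr0 adde0 sup_measure0.
rewrite ge0_integralD //; last 4 first.
- by move=> t _; apply: scaled_indic_ge0; rewrite fine_ge0.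
- exact: measurable_scaled_indic.
- by move=> t _; apply: scaled_indic_ge0; rewrite fine_ge0.
- exact: measurable_scaled_indic.
rewrite !integral_scaled_indic // ?fine_ge0 // !setIidl; last 2 first.
- by move=> t /=; rewrite !in_itv /= => /andP[/ltW /(lt_le_trans ltr01) /ltW ->].
- by move=> t /=; rewrite !in_itv /= => /andP[/ltW ->].
rewrite !lebesgue_measure_itv /= !lte_fin ltr01 (_ : (1 < 2)%R = true); last by lra.
rewrite oppr0 adde0 mule1 -EFinD (_ : (2 - 1)%R = 1%R); last by lra.
by rewrite mulr1 EFinD !fineK.
Qed.

End two_level_test_function.

Section scaled_indicator_integrals.
Context {R : realType} {E : topologicalType}.
Local Open Scope ereal_scope.
Variables (f : E -> R) (c : R) (F : set E) (phi : set E -> \bar R).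
Hypotheses (hf : USC f) (c0 : (0 <= c)%R)
  (phiE : forall A, phi A = if `[< F `&` A !=set0 >] then c%:E else 0).

Let s := sup [set f x | x in F].

Let phi0 : phi set0 = 0.
Proof. by rewrite phiE asboolF // => -[x [_ []]]. Qed.

Let phi_ge0 A : 0 <= phi A.
Proof. by rewrite phiE; case: asboolP; rewrite ?lee_fin. Qed.

Let image_has_sup x : F x -> has_sup [set f x | x in F].
Proof.
case: hf => [[M hM] _ _ _] Fx; split; first by exists (f x), x.
by exists M => _ [y _ <-]; exact: le_trans (ler_norm _) (hM y).
Qed.

Let f_le_s x : F x -> (f x <= s)%R.
Proof. by move=> Fx; apply: (sup_upper_bound (image_has_sup Fx)); exists x. Qed.

Let s_eq0 : ~ (exists x, F x) -> s = 0%R.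
Proof.
move=> nF; rewrite /s (_ : F = set0) ?image_set0 ?sup0 //.
by apply/seteqP; split => // x Fx; apply: nF; exists x.
Qed.

Let s_ge0 : (0 <= s)%R.
Proof.
have [[x Fx]|/s_eq0 -> //] := pselect (exists x, F x).
by case: hf => _ f0 _ _; exact: le_trans (f0 x) (f_le_s Fx).
Qed.

Lemma ext_int_scaled_indicator : ext_int f phi = (c * s)%:E.
Proof.
apply/eqP; rewrite eq_le; apply/andP; split.
  apply: ge_ereal_sup => _ [K cK <-]; rewrite phiE.
  case: asboolP => [[x [Fx Kx]]|_]; last by rewrite mul0e lee_fin mulr_ge0.
  rewrite EFinM lee_wpmul2l ?lee_fin //.
  apply: (@le_trans _ _ (f x)%:E); first by apply: ereal_inf_lbound; exists x.
  by rewrite lee_fin f_le_s.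
have point_le y : F y -> (c * f y)%:E <= ext_int f phi.
  move=> Fy; apply: (@le_trans _ _ (phi [set y] * ereal_inf [set (f x)%:E | x in [set y]])).
    by rewrite image_set1 ereal_inf1 phiE asboolT ?EFinM //; exists y.
  by apply: ereal_sup_ubound; exists [set y] => //; exact: compact_set1.
have [[x0 Fx0]|/s_eq0 ->] := pselect (exists x, F x); last by rewrite mulr0 ext_int_ge0.
apply/lee_addgt0Pr => e e0.
have [->|cn0] := eqVneq c 0%R; first by rewrite mul0r adde_ge0 ?ext_int_ge0 // lee_fin ltW.
have cp : (0 < c)%R by rewrite lt_neqAle eq_sym cn0 c0.
have [_ [y Fy <-] sy] := sup_adherent (divr_gt0 e0 cp) (image_has_sup Fx0).
apply: (@le_trans _ _ ((c * f y)%:E + e%:E)); last by apply: leeD2r; exact: point_le.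
have : (c * (s - e / c) <= c * f y)%R by rewrite ler_wpM2l // ltW.
by rewrite -EFinD lee_fin mulrBr mulrCA mulfV ?mulr1 // => ?; lra.
Qed.

Let level_meets_F t : (0 <= t)%R -> t <> s ->
  F `&` [set x | (t <= f x)%R] !=set0 <-> (t < s)%R.
Proof.
move=> t0 tns; split => [[x [Fx tx]]|ts].
  by rewrite lt_neqAle (le_trans tx (f_le_s Fx)) andbT; apply/eqP.
have [[x0 Fx0]|nF] := pselect (exists x, F x); last by move: ts; rewrite s_eq0 //; lra.
have st : (0 < s - t)%R by rewrite subr_gt0.
have [_ [y Fy <-] sy] := sup_adherent st (image_has_sup Fx0).
by exists y; split => //=; apply: ltW; move: sy; rewrite opprB addrCA subrr addr0.
Qed.

Lemma choquet_int_scaled_indicator : choquet_int f phi = (c * s)%:E.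
Proof.
rewrite /choquet_int (@ge0_integral_eq_off_null _ _ _ (@lebesgue_measure R) _ [set s] _
  (fun t => (c * \1_(`[0%R, s[ : set R) t)%:E)); last 5 first.
- exact: measurable_set1.
- exact: lebesgue_measure_set1.
- by move=> t _; exact: phi_ge0.
- by move=> t _; exact: scaled_indic_ge0.
- move=> t; rewrite /= in_itv /= andbT => t0 tns.
  rewrite indic_itv in_itv /= t0 phiE.
  case: asboolP => [/(level_meets_F t0 tns) -> | nF]; first by rewrite mulr1.
  by rewrite (_ : (t < s)%R = false) ?mulr0 //; apply/negbTE/negP => /(level_meets_F t0 tns).
rewrite integral_scaled_indic // setIidl; last by move=> t /=; rewrite !in_itv /= => /andP[->].
rewrite lebesgue_measure_itv /= lte_fin.
have [sp|sle] := ltP 0%R s; first by rewrite oppr0 adde0 EFinM.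
have -> : s = 0%R by apply/eqP; rewrite eq_le sle s_ge0.
by rewrite mulr0 mule0.
Qed.

End scaled_indicator_integrals.

Lemma max_double_eq_add (R : realDomainType) (a k : R) :
  0 <= k -> k <= a -> Num.max a (2 * k) = a + k -> k = 0 \/ k = a.
Proof. by move=> k0 ka; case: (leP a (2 * k)) => h e; [right|left]; lra. Qed.

Section random_sup_measure.
Context {R : realType} {E : topologicalType} (d : measure_display) (Omega : measurableType d).
Variable Y : Omega -> set E -> \bar R.
Hypothesis hY : random_sup_measure Y.
Local Open Scope ereal_scope.

Lemma rsm_sup_measure w : sup_measure (Y w).
Proof. by case: hY => + _; apply. Qed.

Lemma measurable_rsm_compact K : compact K -> measurable_fun setT (fun w => Y w K).
Proof.
move=> cK; apply: (measurability _ (ErealGenInftyO.measurableE R)) => //.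
move=> /= _ [_ [r ->] <-].
set B := [set m : set E -> \bar R | SM m /\ m K < r%:E].
have -> : setT `&` (fun w => Y w K) @^-1` `]-oo, r%:E[ = Y @^-1` B.
  apply/seteqP; split => w /=; rewrite /mkset in_itv /=.
    by move=> [_ H]; split => //; exact: rsm_sup_measure.
  by move=> [_ H].
case: hY => _; apply; apply: sub_sigma_algebra.
exists [set [set m : set E -> \bar R | m K < r%:E]]; split; last by rewrite bigcup_set1.
move=> _ ->; exists 1%N, (fun _ => [set m : set E -> \bar R | m K < r%:E]); split.
  by move=> i _; left; exists K, r.
by apply/seteqP; split => [m H i _ //|m /(_ 0%N)]; apply.
Qed.

Variable P : probability Omega R.
Hypothesis hI : integrable_rsm P Y.

(* Expectations of [maxe (Y L) (2 Y K) <= Y L + Y K] agree, hence so do the variables a.s. *)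
Lemma rsm_dichotomy_ae K L : compact K -> compact L -> K `<=` L ->
  \int[P]_w ext_int (indic2 K L) (Y w) = \int[P]_w choquet_int (indic2 K L) (Y w) ->
  {ae P, forall w, Y w K = 0 \/ Y w K = Y w L}.
Proof.
move=> cK cL KL.
under eq_integral do rewrite (ext_int_indic2 cK cL KL (rsm_sup_measure _)).
under [X in _ = X -> _]eq_integral do rewrite (choquet_int_indic2 cK cL KL (rsm_sup_measure _)).
have fK w := sup_measure_compact_fin_num (rsm_sup_measure w) cK.
have fL w := sup_measure_compact_fin_num (rsm_sup_measure w) cL.
have Y_ge0 w := sup_measure_ge0 (rsm_sup_measure w).
have mK := measurable_rsm_compact cK; have mL := measurable_rsm_compact cL.
have max_le w : maxe (Y w L) (2%:E * Y w K) <= Y w L + Y w K.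
  rewrite ge_max leeDl //= -(fineK (fK w)) -(fineK (fL w)) -EFinM -EFinD lee_fin.
  have := le_sup_measure (rsm_sup_measure w) KL.
  by rewrite -(fineK (fK w)) -(fineK (fL w)) lee_fin => ?; lra.
move=> hKL.
have int_fin : \int[P]_w maxe (Y w L) (2%:E * Y w K) \is a fin_num.
  rewrite hKL ge0_fin_numE; last by apply: integral_ge0 => w _; exact: adde_ge0.
  by rewrite ge0_integralD // lte_add_pinfty ?hI.
have := ae_eq_ge0_le_integral_eq (emeasurable_funD mL mK)
  (measurable_maxe mL (measurable_funeM _ mK)) _ _ max_le int_fin hKL.
have max_ge0 w : 0 <= maxe (Y w L) (2%:E * Y w K) by rewrite le_max Y_ge0.
have max_fin w : maxe (Y w L) (2%:E * Y w K) \is a fin_num.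
  by rewrite /maxe; case: ifP => _; rewrite ?fin_numM.
move=> /(_ max_ge0 max_fin); apply: filterS => w.
move: (le_sup_measure (rsm_sup_measure w) KL) (sup_measure_ge0 (rsm_sup_measure w) K).
rewrite -(fineK (fK w)) -(fineK (fL w)) -EFinM -EFin_max -EFinD !lee_fin.
by move=> ka k0 [e]; case: (max_double_eq_add k0 ka e) => ->; [left|right].
Qed.

(* The pairs [(s, t)] are enumerated by [pickle], so countably many null sets are discarded. *)
Lemma rsm_cl_cup_dichotomy_ae (b : nat -> set E) : hausdorff_space E ->
  (forall n, compact (closure (b n))) ->
  (forall f, USC f -> \int[P]_w ext_int f (Y w) = \int[P]_w choquet_int f (Y w)) ->
  {ae P, forall w s t,
    Y w (cl_cup b s) = 0 \/ Y w (cl_cup b s) = Y w (cl_cup b (s ++ t))}.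
Proof.
move=> hE b_relcpt ext_eq_choquet.
have dichotomy_n n : {ae P, forall w,
    if (unpickle n : option (seq (seq nat) * seq (seq nat))) is Some (s, t) then
      Y w (cl_cup b s) = 0 \/ Y w (cl_cup b s) = Y w (cl_cup b (s ++ t))
    else True}.
  case: (unpickle n) => [[s t]|]; last exact: aeW.
  have cs := cl_cup_compact b_relcpt (s := s); have cst := cl_cup_compact b_relcpt (s := s ++ t).
  have sub : cl_cup b s `<=` cl_cup b (s ++ t) by rewrite cl_cup_cat; exact: subsetUl.
  exact: (rsm_dichotomy_ae cs cst sub (ext_eq_choquet _ (indic2_USC hE cs cst sub))).
apply: filterS (ae_foralln dichotomy_n) => w Hw s t.
by have := Hw (pickle (s, t)); rewrite pickleK.
Qed.

End random_sup_measure.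

Theorem mainTheorem10 (R : realType) (E : topologicalType)
  (d : measure_display) (Omega : measurableType d) (P : probability Omega R)
  (Y : Omega -> set E -> \bar R) :
  hausdorff_space E -> locally_compact [set: E] -> @second_countable E ->
  random_sup_measure Y -> integrable_rsm P Y ->
  ({ae P, forall w, scaled_indicator (Y w)} <->
   (forall f : E -> R, USC f ->
      (\int[P]_w ext_int f (Y w) = \int[P]_w choquet_int f (Y w))%E)).
Proof.
move=> hE lc sc hY hI; split.
  move=> [N [mN PN indicN]] f hf.
  apply: (ge0_integral_eq_off_null mN PN).
  - by move=> w _; apply/ext_int_ge0/sup_measure0/rsm_sup_measure.
  - by move=> w _; apply/choquet_int_ge0/sup_measure_ge0/rsm_sup_measure.
  move=> w _ Nw; have [c [F [c0 _ YE]]] : scaled_indicator (Y w).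
    by apply: contra_notP Nw => /indicN.
  by rewrite (ext_int_scaled_indicator hf c0 YE) (choquet_int_scaled_indicator hf c0 YE).
move=> ext_eq_choquet.
have [b [b_open b_relcpt b_base]] := relatively_compact_countable_base lc sc.
apply: filterS (rsm_cl_cup_dichotomy_ae hY hI hE b_relcpt ext_eq_choquet) => w.
exact: (scaled_indicator_of_dichotomy b_open b_relcpt b_base hE (rsm_sup_measure hY w)).
Qed.
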